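(* Let $I\subset S=K[x_1,\dots,x_t]$ be an $\mathfrak m$-primary monomial ideal. Then $v(I)\le\operatorname{reg}(S/I)$.
   Context: $K$ is a field, $S$ is standard graded and $\mathfrak m=\langle x_1,\dots,x_t\rangle$. For a proper graded ideal $J$, the $v$-number is $v(J)=\min\{k\ge 0 : \exists f\in S_k,\ \mathcal P\in\operatorname{Ass}(S/J) \text{ with } (J:f)=\mathcal P\}$. $\operatorname{reg}$ denotes Castelnuovo–Mumford regularity: $\operatorname{reg}(M)=\max\{j-i : \beta_{i,j}(M)\ne 0\}$ for the graded Betti numbers $\beta_{i,j}$ of a finitely generated graded $S$-module $M$. *)

From HB Require Import structures.
From mathcomp Require Import all_boot all_algebra.
From mathcomp Require Import mpoly.
From Stdlib Require Import ClassicalEpsilon.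

Set Implicit Arguments.
Unset Strict Implicit.
Unset Printing Implicit Defensive.

Import GRing.Theory.
Local Open Scope ring_scope.

Section Defs.
Variables (K : fieldType) (t : nat).
Local Notation S := {mpoly K[t]}.

Definition in_ideal_gen (G : seq S) (f : S) : Prop :=
  exists c : seq S, size c = size G /\ f = \sum_(i < size G) c`_i * G`_i.

Definition monomial_ideal (I : pred S) : Prop :=
  exists s : seq 'X_{1..t},
    forall f, f \in I <-> in_ideal_gen [seq 'X_[m] | m <- s] f.

Definition max_ideal (f : S) : Prop :=
  in_ideal_gen [seq 'X_i | i <- enum 'I_t] f.

Definition is_ideal (J : pred S) : Prop :=
  0 \in J /\ (forall f g, f \in J -> g \in J -> f + g \in J) /\
  (forall f g, g \in J -> f * g \in J).

Definition proper (J : pred S) : Prop := exists f, f \notin J.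

Definition radical (J : pred S) (f : S) : Prop := exists n, f ^+ n \in J.

Definition primary (J : pred S) : Prop :=
  is_ideal J /\ proper J /\
  forall f g, f * g \in J -> f \notin J -> radical J g.

Definition m_primary (J : pred S) : Prop :=
  primary J /\ forall f, radical J f <-> max_ideal f.

Definition prime_ideal (P : pred S) : Prop :=
  is_ideal P /\ proper P /\ forall f g, f * g \in P -> f \in P \/ g \in P.

Definition colon_eq (J : pred S) (f : S) (P : pred S) : Prop :=
  forall g, g \in P <-> g * f \in J.

Definition Ass (J : pred S) (P : pred S) : Prop :=
  prime_ideal P /\ exists g, colon_eq J g P.

Definition vwitness (J : pred S) (k : nat) : Prop :=
  exists (f : S) (P : pred S), f \is k.-homog /\ Ass J P /\ colon_eq J f P.

Definition v_number (J : pred S) : nat :=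
  epsilon (inhabits 0%N)
    (fun k => vwitness J k /\ forall k', vwitness J k' -> (k <= k')%N).

(* beta_{i,j}(S/I) = dim_K Tor_i^S(S/I, K)_j, computed as the degree-j part of
   the i-th homology of the Koszul complex K(x_1..x_t; S/I).  For a monomial
   ideal I, the degree-j part of K_i(S/I) has K-basis the e_F (x) u with
   |F| = i, u a monomial not in I, deg u + i = j.  Such u have degree <= j,
   so they are enumerated by 'X_{1..t < j.+1}. *)
Definition kbasis (j : nat) := ({set 'I_t} * 'X_{1..t < j.+1})%type.

Definition kvalid (I : pred S) (i : nat) {j : nat} (b : kbasis j) : bool :=
  [&& #|b.1| == i, (mdeg b.2 + i == j)%N & 'X_[bmnm b.2] \notin I].

(* matrix (acting on row vectors) of the Koszul differential
   d(e_F (x) u) = sum_{k in F} (-1)^{#{l in F | l < k}} e_{F \ k} (x) x_k u,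
   from the degree-j part of K_i(S/I) to that of K_(i-1)(S/I) *)
Definition koszul_mx (I : pred S) (i j : nat) : 'M[K]_(#|{: kbasis j}|) :=
  \matrix_(r, c)
    (let b : kbasis j := enum_val r in let b' : kbasis j := enum_val c in
     if kvalid I i b then
       \sum_(k in b.1)
         (if [&& b'.1 == b.1 :\ k,
                 bmnm b'.2 == (bmnm b.2 + U_(k))%MM &
                 'X_[bmnm b'.2] \notin I]
          then (-1) ^+ #|[set l in b.1 | (l < k)%N]| else 0)
     else 0).

Definition betti (I : pred S) (i j : nat) : nat :=
  (#|[set b : kbasis j | kvalid I i b]|
   - \rank (koszul_mx I i j) - \rank (koszul_mx I i.+1 j))%N.

Definition reg_value (I : pred S) (r : nat) : Prop :=
  exists i j, betti I i j <> 0%N /\ r = (j - i)%N.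

Definition reg_quot (I : pred S) : nat :=
  epsilon (inhabits 0%N)
    (fun r => reg_value I r /\ forall r', reg_value I r' -> (r' <= r)%N).

End Defs.

From Pilot Require Import Defs.
From HB Require Import structures.
From mathcomp Require Import all_boot all_algebra.
From mathcomp Require Import mpoly.
From Stdlib Require Import ClassicalEpsilon.

Set Implicit Arguments.
Unset Strict Implicit.
Unset Printing Implicit Defensive.

Import GRing.Theory.
Local Open Scope ring_scope.

(* Since I is m-primary it contains a power of every variable, so
   only finitely many monomials lie outside I; a monomial u of maximal degree
   among them is a socle monomial: u is not in I but x_k u is, for every k.
   Then (I : u) is the maximal ideal m, an associated prime reached in degree
   deg u, so v(I) <= deg u.  On the other hand e_{1..t} (x) u is a cycle of the
   top Koszul complex of S/I in degree deg u + t, and nothing from K_{t+1} = 0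
   can bound it, so beta_{t, deg u + t}(S/I) <> 0 and deg u <= reg(S/I). *)

Section ClassicalExtrema.
Variable P : nat -> Prop.

Let p n := if excluded_middle_informative (P n) then true else false.

Let pP n : reflect (P n) (p n).
Proof. by rewrite /p; case: excluded_middle_informative => h; constructor. Qed.

Lemma epsilon_least_le k :
  P k -> (epsilon (inhabits 0%N) (fun m => P m /\ forall k, P k -> (m <= k)%N) <= k)%N.
Proof.
move=> Pk; have ex_p : exists n, p n by exists k; apply/pP.
have [m /pP Pm minm] := ex_minnP ex_p.
have [_ ->] // := epsilon_spec (inhabits 0%N)
  (fun m => P m /\ forall k, P k -> (m <= k)%N)
  (ex_intro _ m (conj Pm (fun k Pk => minm k (introT (pP k) Pk)))).
Qed.

Lemma epsilon_greatest_ge k (B : nat) : (forall n, P n -> n <= B)%N ->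
  P k -> (k <= epsilon (inhabits 0%N) (fun m => P m /\ forall k, P k -> (k <= m)%N))%N.
Proof.
move=> leB Pk; have ex_p : exists n, p n by exists k; apply/pP.
have [m /pP Pm maxm] := ex_maxnP ex_p (fun n pn => leB n (elimT (pP n) pn)).
have [_ ->] // := epsilon_spec (inhabits 0%N)
  (fun m => P m /\ forall k, P k -> (k <= m)%N)
  (ex_intro _ m (conj Pm (fun k Pk => maxm k (introT (pP k) Pk)))).
Qed.

End ClassicalExtrema.

Lemma mxrank_le_card_nonzero_rows (F : fieldType) m n (M : 'M[F]_(m, n)) :
  (\rank M <= #|[set r | row r M != 0%R]|)%N.
Proof.
set R := [set r | row r M != 0%R].
pose A := rowsub (fun i : 'I_#|R| => enum_val i) M.
apply: (leq_trans _ (rank_leq_row A)); apply: mxrankS.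
apply/row_subP => i; case: (boolP (i \in R)) => Ri.
  by rewrite -(enum_rankK_in Ri Ri) -row_rowsub; apply: row_sub.
by move: Ri; rewrite inE negbK => /eqP ->; apply: sub0mx.
Qed.

Section MonomialIdeals.
Variables (K : fieldType) (t : nat).
Local Notation S := {mpoly K[t]}.

Definition socle_monomial (I : pred S) (u : 'X_{1..t}) : Prop :=
  'X_[u] \notin I /\ forall k : 'I_t, 'X_[u + U_(k)] \in I.

Lemma in_ideal_gen_sum (T : Type) (s : seq T) (c G : T -> S) :
  in_ideal_gen [seq G x | x <- s] (\sum_(x <- s) c x * G x).
Proof.
exists [seq c x | x <- s]; split; first by rewrite !size_map.
elim: s => [|x s IH]; first by rewrite big_ord0 big_nil.
by rewrite big_ord_recl big_cons /= -IH.
Qed.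

Lemma max_ideal_X (k : 'I_t) : max_ideal ('X_k : S).
Proof.
have := in_ideal_gen_sum (enum 'I_t) (fun i => (i == k)%:R) (fun i => 'X_i).
rewrite big_enum /= (bigD1 k) //= eqxx mul1r big1 ?addr0 //.
by move=> i /negPf ->; rewrite mul0r.
Qed.

Lemma m_primary_Xn_in (I : pred S) :
  m_primary I -> exists N, forall k : 'I_t, ('X_k : S) ^+ N \in I.
Proof.
move=> [[[_ [_ idealM]] _] rad_max].
have [n Xn_in] := fin_all_exists (fun k => proj2 (rad_max _) (max_ideal_X k)).
exists (\max_k n k) => k.
by rewrite -(subnK (leq_bigmax k)) exprD; apply: idealM.
Qed.

Lemma prime_ideal_const_free : prime_ideal (fun g : S => g@_0 == 0).
Proof.
split; [split; [|split]|split] => [|f g|f g||f g]; rewrite ?unfold_in /=.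
- by rewrite mcoeff0.
- by move=> /eqP f0 /eqP g0; rewrite mcoeffD f0 g0 addr0.
- by move=> /eqP g0; rewrite rmorphM /= g0 mulr0.
- by exists 1; rewrite unfold_in /= mcoeff1 eqxx oner_eq0.
- by rewrite rmorphM /= mulf_eq0 => /orP.
Qed.

Section Ideal.
Variable I : pred S.
Hypothesis idealI : is_ideal I.

Lemma ideal0 : 0 \in I.
Proof. by case: idealI. Qed.

Lemma idealD f g : f \in I -> g \in I -> f + g \in I.
Proof. by case: idealI => _ [D _]; apply: D. Qed.

Lemma idealMl f g : g \in I -> f * g \in I.
Proof. by case: idealI => _ [_ M]; apply: M. Qed.

Lemma idealB f g : f \in I -> g \in I -> f - g \in I.
Proof. by move=> If Ig; rewrite idealD // -mulN1r idealMl. Qed.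

Lemma ideal_sum (T : Type) (s : seq T) (F : T -> S) :
  (forall x, F x \in I) -> \sum_(x <- s) F x \in I.
Proof.
move=> IF; elim: s => [|x s IH]; first by rewrite big_nil ideal0.
by rewrite big_cons idealD.
Qed.

Lemma idealZ_cancel c p : c != 0 -> c *: p \in I -> p \in I.
Proof.
move=> c_neq0 Icp; have -> : p = c^-1%:MP * (c *: p).
  by rewrite mul_mpolyC scalerA mulVf // scale1r.
exact: idealMl.
Qed.

Lemma proper_ideal_1notin : Defs.proper I -> (1 : S) \notin I.
Proof. by move=> [f]; apply: contra => I1; rewrite -(mulr1 f) idealMl. Qed.

Lemma socle_mulX_in (u : 'X_{1..t}) :
  (forall k : 'I_t, 'X_[u + U_(k)] \in I) ->
  forall m : 'X_{1..t}, m != 0%MM -> 'X_[m + u] \in I.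
Proof.
move=> uk_in m m_neq0; have [k mk_neq0] : exists k, m k != 0%N.
  apply/existsP; apply: contraR m_neq0 => /existsPn m0.
  by apply/eqP/mnmP => i; rewrite mnm0E; apply/eqP/negPn/m0.
rewrite -(submK (etrans (lep1mP k m) mk_neq0)) -addmA [(U_(k) + u)%MM]addmC.
by rewrite mpolyXD idealMl.
Qed.

Lemma socle_colonE u : socle_monomial I u ->
  forall g, (g * 'X_[u] \in I) = (g@_0 == 0).
Proof.
move=> [u_notin uk_in].
have const_free_mul g : g@_0 = 0 -> g * 'X_[u] \in I.
  move=> g0; rewrite [g]mpolyE big_distrl /=; apply: ideal_sum => m.
  case: (eqVneq m 0%MM) => [->|m_neq0]; first by rewrite g0 scale0r mul0r ideal0.
  by rewrite -scalerAl -mpolyXD -mul_mpolyC idealMl // socle_mulX_in.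
move=> g; apply/idP/eqP => [gu_in|]; last exact: const_free_mul.
apply/eqP; move: u_notin; apply: contraNT => g0_neq0; apply: (idealZ_cancel g0_neq0).
have -> : g@_0 *: 'X_[u] = g * 'X_[u] - (g - (g@_0)%:MP) * 'X_[u] :> S.
  by rewrite mulrBl opprB addrC subrK mul_mpolyC.
by rewrite idealB // const_free_mul // mcoeffB mcoeffC eqxx mulr1 subrr.
Qed.

Lemma socle_vwitness u : socle_monomial I u -> vwitness I (mdeg u).
Proof.
move=> socle_u; have colon_u : colon_eq I 'X_[u] (fun g => g@_0 == 0).
  by move=> g; rewrite unfold_in /= socle_colonE.
exists 'X_[u], (fun g => g@_0 == 0); split; first by rewrite dhomogX.
by split=> //; split; [exact: prime_ideal_const_free | exists 'X_[u]].
Qed.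

Variable N : nat.
Hypothesis Xn_in : forall k : 'I_t, ('X_k : S) ^+ N \in I.

Lemma mdeg_notin_ideal_le (m : 'X_{1..t}) :
  'X_[m] \notin I -> (mdeg m <= t * N)%N.
Proof.
move=> m_notin; have lt_mN k : (m k < N)%N.
  rewrite ltnNge; apply: contra m_notin => le_Nm.
  have le : (U_(k) *+ N <= m)%MM.
    apply/mnm_lepP => i; rewrite mulmnE mnm1E.
    by case: eqP => [<-|_]; rewrite ?mul1n ?mul0n.
  by rewrite -(submK le) mpolyXD -mpolyXn idealMl.
rewrite mdegE -[t in (_ <= t * _)%N]card_ord -sum_nat_const.
by apply: leq_sum => i _; apply: ltnW.
Qed.

Lemma socle_monomial_exists : Defs.proper I -> exists u, socle_monomial I u.
Proof.
move=> properI; pose T := 'X_{1..t < (t * N).+1}.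
pose standard (b : T) := 'X_[bmnm b] \notin I.
have standard0 : standard bm0 by rewrite /standard mpolyX0 proper_ideal_1notin.
have [b b_notin maxb] := arg_maxnP (fun b : T => mdeg (bmnm b)) standard0.
exists (bmnm b); split=> // k; apply: contraT => uk_notin.
have bnd : (mdeg (bmnm b + U_(k)) < (t * N).+1)%N by rewrite ltnS mdeg_notin_ideal_le.
by have := maxb (BMultinom bnd) uk_notin; rewrite /= mdegD mdeg1 addn1 ltnn.
Qed.

Lemma reg_value_le r : reg_value I r -> (r <= t * N)%N.
Proof.
move=> [i [j [betti_neq0 ->]]].
have : #|[set b : kbasis t j | kvalid I i b]| != 0%N.
  by apply: contra_notN betti_neq0 => /eqP card0; rewrite /betti card0.
rewrite cards_eq0 => /set0Pn [b]; rewrite inE => /and3P [_ /eqP deg_b b_notin].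
by rewrite -deg_b addnK mdeg_notin_ideal_le.
Qed.

End Ideal.

Lemma koszul_mx_eq0 (I : pred S) i j : (t < i)%N -> koszul_mx I i j = 0.
Proof.
move=> lt_ti; apply/matrixP => r c; rewrite !mxE /kvalid.
have : (#|(enum_val r : kbasis t j).1| <= t)%N.
  by rewrite -[X in (_ <= X)%N]card_ord max_card.
by case: eqP => // ->; rewrite leqNgt lt_ti.
Qed.

Lemma betti_top_socle (I : pred S) u :
  socle_monomial I u -> betti I t (mdeg u + t) != 0%N.
Proof.
move=> [u_notin uk_in]; set j := (mdeg u + t)%N.
have lt_uj : (mdeg u < j.+1)%N by rewrite ltnS leq_addr.
pose top : kbasis t j := (setT, BMultinom lt_uj).
set V := [set b : kbasis t j | kvalid I t b].
have top_valid : kvalid I t top by rewrite /kvalid /= cardsT card_ord !eqxx u_notin.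
have top_in : top \in V by rewrite inE.
set M := koszul_mx I t j.
have row_neq0 r : row r M != 0 -> enum_val r \in V :\ top.
  apply: contraR; rewrite !inE negb_and negbK => /orP [/eqP top_r|].
    apply/eqP/rowP => c; rewrite !mxE top_r /= top_valid.
    by apply: big1 => k _; case: eqP => //= _; case: eqP => //= ->; rewrite uk_in.
  by move=> r_notin; apply/eqP/rowP => c; rewrite !mxE /= (negPf r_notin).
have rank_lt : (\rank M < #|V|)%N.
  apply: (leq_ltn_trans (mxrank_le_card_nonzero_rows M)).
  rewrite (cardsD1 top V) top_in add1n ltnS -(card_imset _ enum_val_inj).
  apply/subset_leq_card/subsetP => b /imsetP [r]; rewrite inE => r_neq0 ->.
  exact: row_neq0.
by rewrite /betti -/M koszul_mx_eq0 // mxrank0 subn0 subn_eq0 -ltnNge.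
Qed.

End MonomialIdeals.

Theorem theorem4p19 (K : fieldType) (t : nat) (I : pred {mpoly K[t]}) :
  monomial_ideal I -> m_primary I ->
  (v_number I <= reg_quot I)%N.
Proof.
move=> _ primI; have [[idealI [properI _]] _] := primI.
have [N Xn_in] := m_primary_Xn_in primI.
have [u socle_u] := socle_monomial_exists idealI Xn_in properI.
apply: (leq_trans (epsilon_least_le (socle_vwitness idealI socle_u))).
apply: (epsilon_greatest_ge (reg_value_le idealI Xn_in)).
exists t, (mdeg u + t)%N; split; last by rewrite addnK.
exact/eqP/betti_top_socle.
Qed.
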